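(* Let $v=(v_l,v_h)$ be a valuation profile and let $\alpha\in(0,1)$. Then for each $t\in\{0,1,\dots,ES(v)\}$ there is a strict Nash equilibrium of the $\alpha$-auction game with valuations $v$ whose payoff vector is $(\pi_l,\pi_h)=(c_l+t,\ c_h+(ES(v)-t))$. That is, the set of strict Nash equilibrium payoffs of each interior-price auction contains the set $\{(c_l+t,\,c_h+(ES(v)-t)) : t=0,\dots,ES(v)\}$, which is the set of Nash equilibrium payoffs of the extreme-price auctions ($\alpha\in\{0,1\}$).
   Context: Two agents $l,h$ jointly own an indivisible good. Agent $i\in\{l,h\}$ has valuation $v_i$; valuations are even nonnegative integers bounded by a maximum valuation $\overline{v}$, with $v_l<v_h$. Agent $i$'s utility from receiving the object and paying $p$ to the other agent is $v_i-p$; from not receiving the object and receiving transfer $p$ it is $p$; agents are expected-utility maximizers. Net valuations are $c_i\equiv v_i/2$, and the equity surplus is $ES(v)\equiv c_h-c_l$. The bid set is $\mathcal{B}=\{0,1,\dots,\overline{p}\}$ with $\overline{p}$ an integer, $\overline{p}\geq\overline{v}/2$. For $\alpha\in[0,1]$, the $\alpha$-auction (with tie-breaker favoring $h$) is: each agent simultaneously chooses a bid in $\mathcal{B}$; the agent with the strictly higher bid receives the object, and in case of a tie agent $h$ receives the object; the agent receiving the object pays $\alpha\cdot(\text{winner's bid})+(1-\alpha)\cdot(\text{loser's bid})$ to the other agent. Auctions with $\alpha\in\{0,1\}$ are extreme-price auctions; those with $\alpha\in(0,1)$ are interior-price auctions. A strict Nash equilibrium is a strategy profile in which each agent's strategy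 is her unique best response to the other agent's strategy (necessarily a pure-strategy profile). *)

From HB Require Import structures.
From mathcomp Require Import all_boot all_order all_algebra.
Set Implicit Arguments. Unset Strict Implicit. Unset Printing Implicit Defensive.
Import Order.TTheory GRing.Theory Num.Theory.
Local Open Scope ring_scope.

Section Auction.
Variable R : realFieldType.

Definition price (alpha : R) (bw bl : nat) : R :=
  alpha * bw%:R + (1 - alpha) * bl%:R.

(* utility of agent l (valuation vl) at bid profile (bl, bh);
   l wins only with a strictly higher bid (ties favour h) *)
Definition util_l (alpha : R) (vl : nat) (bl bh : nat) : R :=
  if (bh < bl)%N then vl%:R - price alpha bl bh else price alpha bh bl.

Definition util_h (alpha : R) (vh : nat) (bl bh : nat) : R :=
  if (bl <= bh)%N then vh%:R - price alpha bh bl else price alpha bl bh.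

Definition strict_NE (alpha : R) (pbar vl vh bl bh : nat) : Prop :=
  [/\ (bl <= pbar)%N, (bh <= pbar)%N,
      (forall b, (b <= pbar)%N -> b <> bl -> util_l alpha vl b bh < util_l alpha vl bl bh)
    & (forall b, (b <= pbar)%N -> b <> bh -> util_h alpha vh bl b < util_h alpha vh bl bh)].

Definition netval (v : nat) : R := v%:R / 2%:R.

(* equity surplus ES(v) = c_h - c_l, as a natural number (v even) *)
Definition ES (vl vh : nat) : nat := (vh./2 - vl./2)%N.

End Auction.

From HB Require Import structures.
From mathcomp Require Import all_boot all_order all_algebra.
From mathcomp Require Import zify ring lra.
Import Order.TTheory GRing.Theory Num.Theory.
Local Open Scope ring_scope.

(* For t <= ES(v) put p := c_l + t, so that c_l <= p <= c_h.
   In the profile where both agents bid p, agent h wins the tie and pays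
   exactly p, so the payoffs are (p, v_h - p) = (c_l + t, c_h + (ES - t)).
   The profile is a strict equilibrium because, for an interior weight
   alpha, the price lies strictly between the two distinct bids:
   - a deviation upwards makes the deviator win at a price strictly above p,
     which is worse since winning at p is worth v_l - p <= p to l and
     exactly v_h - p to h;
   - a deviation downwards makes the deviator lose and receive a price
     strictly below p, worse than p for l and than v_h - p >= p for h. *)

Section InteriorPrice.
Variable R : realFieldType.
Variable alpha : R.
Hypothesis alpha_gt0 : 0 < alpha.
Hypothesis alpha_lt1 : alpha < 1.

Lemma price_diag (p : nat) : price alpha p p = p%:R.
Proof. by rewrite /price; ring. Qed.

Lemma price_gt_loser {bw bl : nat} : (bl < bw)%N -> bl%:R < price alpha bw bl.
Proof.
move=> lt_bl_bw; have : (bl%:R : R) < bw%:R by rewrite ltr_nat.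
move: alpha_gt0 alpha_lt1; rewrite /price => *; nra.
Qed.

Lemma price_lt_winner {bw bl : nat} : (bl < bw)%N -> price alpha bw bl < bw%:R.
Proof.
move=> lt_bl_bw; have : (bl%:R : R) < bw%:R by rewrite ltr_nat.
move: alpha_gt0 alpha_lt1; rewrite /price => *; nra.
Qed.

Lemma util_l_deviation (vl p b : nat) :
  (vl <= p.*2)%N -> b <> p -> util_l alpha vl b p < p%:R.
Proof.
move=> vl_le b_neq; rewrite /util_l.
have vl_le_R : (vl%:R : R) <= p%:R + p%:R by rewrite -natrD addnn ler_nat.
case: (ltngtP p b) => [lt_pb|lt_bp|eq_pb]; last by rewrite eq_pb in b_neq.
- by have := price_gt_loser lt_pb; lra.
- exact: price_lt_winner.
Qed.

Lemma util_h_deviation (vh p b : nat) :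
  (p.*2 <= vh)%N -> b <> p -> util_h alpha vh p b < vh%:R - p%:R.
Proof.
move=> le_vh b_neq; rewrite /util_h.
have le_vh_R : (p%:R + p%:R : R) <= vh%:R by rewrite -natrD addnn ler_nat.
case: (ltngtP p b) => [lt_pb|lt_bp|eq_pb]; last by rewrite eq_pb in b_neq.
- by have := price_gt_loser lt_pb; lra.
- by have := price_lt_winner lt_bp; lra.
Qed.

Lemma equal_bids_strict_NE (pbar vl vh p : nat) :
  (p <= pbar)%N -> (vl <= p.*2)%N -> (p.*2 <= vh)%N ->
  strict_NE alpha pbar vl vh p p.
Proof.
move=> p_le vl_le le_vh; split=> // b _ b_neq.
- by rewrite {2}/util_l ltnn price_diag; exact: util_l_deviation.
- by rewrite {2}/util_h leqnn price_diag; exact: util_h_deviation.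
Qed.

End InteriorPrice.

Lemma netval_even (R : realFieldType) (v : nat) :
  ~~ odd v -> netval R v = (v./2)%:R.
Proof.
move=> v_even; rewrite /netval -{1}(even_halfK v_even) -muln2 natrM.
by rewrite mulfK // pnatr_eq0.
Qed.

Theorem proposition2 (R : realFieldType) (vbar pbar vl vh : nat) (alpha : R) :
  ~~ odd vl -> ~~ odd vh -> (vl < vh)%N -> (vh <= vbar)%N ->
  (vbar <= pbar.*2)%N ->
  0 < alpha -> alpha < 1 ->
  forall t : nat, (t <= ES vl vh)%N ->
  exists bl bh : nat,
    strict_NE alpha pbar vl vh bl bh /\
    util_l alpha vl bl bh = netval R vl + t%:R /\
    util_h alpha vh bl bh = netval R vh + (ES vl vh - t)%N%:R.
Proof.
move=> vl_even vh_even vl_lt vh_le vbar_le alpha_gt0 alpha_lt1 t t_le.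
have vl_half := even_halfK vl_even; have vh_half := even_halfK vh_even.
move: t_le; rewrite /ES => t_le.
pose p := (vl./2 + t)%N.
exists p, p; split; [|split].
- by apply: equal_bids_strict_NE => //; rewrite /p; lia.
- by rewrite /util_l ltnn price_diag netval_even // -natrD.
- rewrite /util_h leqnn price_diag netval_even // -natrD.
  have vh_split : vh = (p + (vh./2 + (vh./2 - vl./2 - t)))%N by rewrite /p; lia.
  by rewrite {1}vh_split natrD addrC addKr.
Qed.
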